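(* Let $n\ge k\ge 2$ be integers. Then \[ \mathsf{opt}_{\operatorname{bandit}}^{\operatorname{det}}(n,k)\le k\ln(n/k)+k-1. \]
   Context: Prediction with expert advice in the realizable case: $\mathcal{Y}=\{1,\dots,k\}$, $\mathcal{X}=[k]^n$, experts $h_i(x)=x_i$, $i=1,\dots,n$. $\mathcal{P}_0$ is the set of finite sequences of examples in $\mathcal{X}\times\mathcal{Y}$ consistent with some $h_i$ (no errors). Bandit feedback: each round the adversary presents $x_t$, a deterministic learner predicts $\hat y_t$ as a function of past observations and $x_t$, and learns only whether $\hat y_t$ equals the true label $y_t$. $\mathsf{opt}_{\operatorname{bandit}}^{\operatorname{det}}(n,k)$ is the infimum over deterministic learners of the supremum over $S\in\mathcal{P}_0$ of the number of mistakes ($\hat y_t\ne y_t$). *)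

From mathcomp Require Import all_boot all_order all_algebra.
From mathcomp Require Import all_classical all_reals all_analysis.
Set Implicit Arguments. Unset Strict Implicit. Unset Printing Implicit Defensive.
Import Order.TTheory GRing.Theory Num.Theory.
Local Open Scope classical_set_scope.
Local Open Scope ring_scope.

(* Instance space X = [k]^n, label space Y = [k] (labels 0..k-1 for 1..k). *)
Definition inst (n k : nat) := {ffun 'I_n -> 'I_k}.
Definition example (n k : nat) := (inst n k * 'I_k)%type.

Definition expert (n k : nat) (i : 'I_n) (x : inst n k) : 'I_k := x i.

Definition realizable (n k : nat) (S : seq (example n k)) : Prop :=
  exists i : 'I_n, all (fun e : example n k => expert i e.1 == e.2) S.

(* What the learner observes in a round: instance, its prediction, and the
   bandit feedback bit [prediction == true label]. *)
Definition obs (n k : nat) := (inst n k * 'I_k * bool)%type.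

Definition learner (n k : nat) := seq (obs n k) -> inst n k -> 'I_k.

Fixpoint run (n k : nat) (L : learner n k) (hist : seq (obs n k))
    (S : seq (example n k)) : nat :=
  match S with
  | [::] => 0%N
  | e :: S' =>
      let yh := L hist e.1 in
      ((yh != e.2) + run L (rcons hist (e.1, yh, yh == e.2)) S')%N
  end.

Definition mistakes (n k : nat) (L : learner n k) (S : seq (example n k)) : nat :=
  run L [::] S.

Definition opt_bandit_det (R : realType) (n k : nat) : \bar R :=
  ereal_inf [set ereal_sup [set ((mistakes L S)%:R : R)%:E | S in @realizable n k]
            | L in [set: learner n k]].

(** The learner keeps the version space V of experts consistent with all the
feedback so far and predicts the label chosen by the largest class of V.  A
correct prediction never enlarges V; a mistake removes that whole class, which
holds c >= |V|/k experts.  Hence each mistake decreases the potential of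
|V|, namely [m - 1] for [m <= k] and [k ln (m/k) + k - 1] for [m >= k], by at
least one: below [k] because at least one expert goes, above [k] because
[k ln (m/(m - c)) >= k c/m >= 1].  Since the potential is non-negative on
non-empty version spaces and its value at [n] is the claimed bound, the
learner makes at most that many mistakes on any realizable sequence. *)

From mathcomp Require Import all_boot all_order all_algebra.
From mathcomp Require Import all_classical all_reals all_analysis.
From mathcomp Require Import ring lra.
Import Order.TTheory GRing.Theory Num.Theory.
Local Open Scope ring_scope.
Set Implicit Arguments. Unset Strict Implicit. Unset Printing Implicit Defensive.

Section PluralityVote.
Variables (T : finType) (k : nat) (y0 : 'I_k) (f : T -> 'I_k).

Definition plurality (V : {set T}) : 'I_k :=
  [arg max_(y > y0) #|V :&: [set i | f i == y]|].

Lemma card_le_mul_plurality (V : {set T}) :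
  (#|V| <= k * #|V :&: [set i | f i == plurality V]|)%N.
Proof.
rewrite /plurality; case: arg_maxnP => // y _ y_max.
rewrite -sum1_card (partition_big f predT) //=.
rewrite -[X in (_ <= X * _)%N]card_ord -sum_nat_const leq_sum // => j _.
apply: leq_trans (y_max j isT).
by rewrite -sum1_card; apply/eq_leq/eq_bigl => i; rewrite !inE.
Qed.

End PluralityVote.

Lemma ln_sub_le (R : realType) (k m c : R) :
  0 < k -> 0 < c < m -> m <= k * c -> k * ln (m - c) + 1 <= k * ln m.
Proof.
move=> k_gt0 /andP[c_gt0 c_lt_m] m_le_kc.
have m_gt0 : 0 < m by apply: lt_trans c_lt_m.
have -> : m - c = m * (1 + - (c / m)) by field; rewrite gt_eqF.
rewrite lnM ?posrE ?subr_gt0 ?ltr_pdivrMr ?mul1r // mulrDr.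
have ln_le : ln (1 + - (c / m)) <= - (c / m).
  by apply: le_ln1Dx; rewrite ltrN2 ltr_pdivrMr ?mul1r.
have kc_ge1 : 1 <= k * (c / m) by rewrite mulrA ler_pdivlMr ?mul1r.
have := ler_wpM2l (ltW k_gt0) ln_le; rewrite mulrN; lra.
Qed.

Section Potential.
Variables (R : realType) (k : nat).
Hypothesis k_gt0 : (0 < k)%N.

Definition potential (m : nat) : R :=
  if (m <= k)%N then m%:R - 1 else k%:R * ln (m%:R / k%:R) + k%:R - 1.

Let kR_gt0 : 0 < k%:R :> R. Proof. by rewrite ltr0n. Qed.

Lemma potential_linear (m : nat) : (m <= k)%N -> potential m = m%:R - 1.
Proof. by rewrite /potential => ->. Qed.

Lemma potential_log (m : nat) : (k <= m)%N ->
  potential m = k%:R * ln (m%:R / k%:R) + k%:R - 1.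
Proof.
move=> km; rewrite /potential; case: leqP => // mk.
have -> : m = k by apply/eqP; rewrite eqn_leq mk km.
by rewrite divff ?ln1 ?mulr0 ?add0r ?gt_eqF.
Qed.

Lemma potential_ge_log (m : nat) : (k <= m)%N -> k%:R - 1 <= potential m.
Proof.
move=> km; rewrite potential_log // -addrA lerDr mulr_ge0 ?ln_ge0 //.
by rewrite ler_pdivlMr // mul1r ler_nat.
Qed.

Lemma potential_le (a b : nat) : (a <= b)%N -> potential a <= potential b.
Proof.
move=> ab; case: (leqP b k) => [bk | kb].
  by rewrite !potential_linear ?(leq_trans ab) // lerB // ler_nat.
case: (leqP a k) => [ak | ka].
  rewrite potential_linear //; apply: le_trans (potential_ge_log (ltnW kb)).
  by rewrite lerB // ler_nat.
have a_gt0 := leq_trans k_gt0 (ltnW ka).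
rewrite (potential_log (ltnW ka)) (potential_log (ltnW (leq_trans ka ab))).
rewrite lerD2r lerD2r ler_pM2l // ler_ln ?posrE ?divr_gt0 ?ltr0n //.
  by rewrite ler_pM2r ?invr_gt0 // ler_nat.
exact: leq_trans ab.
Qed.

Lemma potential_ge0 (m : nat) : (0 < m)%N -> 0 <= potential m.
Proof.
by move=> m_gt0; apply: le_trans (potential_le m_gt0); rewrite potential_linear ?subrr.
Qed.

Lemma potential_step (m c : nat) : (0 < c)%N -> (c <= m)%N -> (m <= k * c)%N ->
  potential (m - c) + 1 <= potential m.
Proof.
move=> c_gt0 cm m_le_kc.
have c_ge1 : 1 <= c%:R :> R by rewrite ler1n.
case: (leqP m k) => [mk | km].
  rewrite !potential_linear ?(leq_trans (leq_subr c m)) // natrB //; lra.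
case: (leqP k (m - c)) => [kmc | mck].
  have mc_gt0 : (0 < m - c)%N by apply: leq_trans kmc.
  rewrite (potential_log kmc) (potential_log (ltnW km)).
  rewrite !ln_div ?posrE ?ltr0n ?(leq_trans k_gt0 (ltnW km)) // !mulrBr.
  have := @ln_sub_le R k%:R m%:R c%:R kR_gt0.
  rewrite -natrB // ltr0n ltr_nat c_gt0 /= -natrM ler_nat.
  by rewrite -subn_gt0 mc_gt0 => /(_ isT m_le_kc); lra.
rewrite (potential_linear (ltnW mck)).
have := potential_ge_log (ltnW km).
have : (m - c)%:R + 1 <= k%:R :> R by rewrite natr1 ler_nat.
lra.
Qed.

End Potential.

Section VersionSpace.
Variables (n k : nat).

Definition version_space (hist : seq (obs n k)) : {set 'I_n} :=
  [set i | all (fun o : obs n k => (expert i o.1.1 == o.1.2) == o.2) hist].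

Lemma version_space0 : version_space [::] = [set: 'I_n].
Proof. by apply/setP => i; rewrite !inE. Qed.

Lemma version_space_rcons hist (o : obs n k) :
  version_space (rcons hist o) =
  version_space hist :&: [set i | (expert i o.1.1 == o.1.2) == o.2].
Proof. by apply/setP => i; rewrite !inE all_rcons andbC. Qed.

Lemma version_space_rcons_wrong hist x (yh : 'I_k) :
  version_space (rcons hist (x, yh, false)) =
  version_space hist :\: [set i | x i == yh].
Proof.
by rewrite version_space_rcons; apply/setP => i; rewrite !inE eqbF_neg andbC.
Qed.

End VersionSpace.

Section PluralityLearner.
Variables (R : realType) (n k : nat) (y0 : 'I_k).

Definition plurality_learner : learner n k :=
  fun hist x => plurality y0 x (version_space hist).

Let k_gt0 : (0 < k)%N. Proof. exact: leq_ltn_trans (leq0n _) (ltn_ord y0). Qed.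

Lemma run_plurality_le_potential (i0 : 'I_n) S hist :
  all (fun e : example n k => expert i0 e.1 == e.2) S ->
  i0 \in version_space hist ->
  (run plurality_learner hist S)%:R <= potential R k #|version_space hist|.
Proof.
elim: S hist => [|[x y] S IH] hist /=.
  by move=> _ i0V; apply: potential_ge0 => //; apply/card_gt0P; exists i0.
move=> /andP[/eqP i0_y consistent_S] i0V.
set V := version_space hist in i0V *; set yh := plurality_learner hist x.
have V_gt0 : (0 < #|V|)%N by apply/card_gt0P; exists i0.
have i0V' : i0 \in version_space (rcons hist (x, yh, yh == y)).
  by rewrite version_space_rcons inE i0V inE /= i0_y (eq_sym y).
have {IH} := IH _ consistent_S i0V'.
case: (eqVneq yh y) => [_ | _] /= IH.
  apply: le_trans IH _; apply: potential_le => //.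
  by rewrite subset_leq_card // version_space_rcons subsetIl.
rewrite version_space_rcons_wrong cardsD in IH.
set c := #|V :&: _| in IH.
have m_le_kc : (#|V| <= k * c)%N by apply: card_le_mul_plurality.
have c_gt0 : (0 < c)%N.
  by rewrite -(ltn_pmul2l k_gt0) muln0 (leq_trans V_gt0 m_le_kc).
have := potential_step R k_gt0 c_gt0 (subset_leq_card (subsetIl _ _)) m_le_kc.
rewrite natrD mulr1n; lra.
Qed.

Lemma mistakes_plurality_learner_le S : realizable S ->
  (mistakes plurality_learner S)%:R <= potential R k n.
Proof.
move=> [i0 consistent_S]; rewrite -[n in potential _ _ n]card_ord -cardsT.
rewrite -(version_space0 n k); apply: run_plurality_le_potential consistent_S _.
by rewrite version_space0 inE.
Qed.

End PluralityLearner.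

Local Open Scope ereal_scope.

Theorem corollary4p4 (R : realType) (n k : nat) :
  (2 <= k)%N -> (k <= n)%N ->
  opt_bandit_det R n k <=
    ((k%:R * ln (n%:R / k%:R) + k%:R - 1)%R : R)%:E.
Proof.
move=> k_ge2 kn; have k_gt0 : (0 < k)%N := ltnW k_ge2.
set L := plurality_learner (n:=n) (Ordinal k_gt0).
apply: (le_trans (ereal_inf_lbound _)); first by exists L.
apply: ge_ereal_sup => _ [S realizable_S <-].
by rewrite lee_fin -(potential_log R k_gt0 kn) mistakes_plurality_learner_le.
Qed.
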